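(* Let $\mathcal B$ be the variety generated by all algebras $(L,t)$ where $L$ is a lattice and $t(x,y,z)=x\wedge(y\vee z)$, and let $\mathcal B^d$ be the variety generated by such algebras with $L$ a distributive lattice. Then neither $\mathcal B$ nor $\mathcal B^d$ is $5$-reversed-modular. Moreover the congruence identities $\alpha(\beta\circ\gamma)\subseteq\alpha(\gamma\circ\beta)\circ\alpha(\gamma\circ\beta)$ and $\alpha(\beta\circ\gamma)\subseteq\gamma\circ\alpha\beta\circ\alpha\gamma\circ\beta$ fail both in $\mathcal B$ and in $\mathcal B^d$. In particular neither $\mathcal B$ nor $\mathcal B^d$ is $4$-alvin.
   Context: Reversed Day terms: $4$-ary $u_0,\dots,u_m$ with $u_k(x,y,y,x)=x$ for all $k$, $u_0(x,y,z,w)=x$, $u_m(x,y,z,w)=w$, $u_k(x,x,w,w)=u_{k+1}(x,x,w,w)$ for odd $k$, $u_k(x,y,y,w)=u_{k+1}(x,y,y,w)$ for even $k$ ($0\le k<m$); $m$-reversed-modular means having such $u_0,\dots,u_m$. Alvin terms: ternary $t_0,\dots,t_n$ with $t_0(x,y,z)=x$, $t_n(x,y,z)=z$, $t_h(x,y,x)=x$ for all $h$, $t_h(x,z,z)=t_{h+1}(x,z,z)$ for even $h$, $t_h(x,x,z)=t_{h+1}(x,x,z)$ for odd $h$; $n$-alvin means having such $t_0,\dots,t_n$. In congruence identities juxtaposition is intersection and $\circ$ composition. *)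

From HB Require Import structures.
From mathcomp Require Import all_boot all_order.

Set Implicit Arguments.
Unset Strict Implicit.
Unset Printing Implicit Defensive.

Inductive term (V : Type) : Type :=
  | tvar : V -> term V
  | tapp : term V -> term V -> term V -> term V.

Fixpoint eval (V A : Type) (f : A -> A -> A -> A) (e : V -> A) (s : term V) : A :=
  match s with
  | tvar v => e v
  | tapp s1 s2 s3 => f (eval f e s1) (eval f e s2) (eval f e s3)
  end.

Inductive var3 := X3 | Y3 | Z3.
Inductive var4 := X4 | Y4 | Z4 | W4.

Definition env3 (A : Type) (x y z : A) (v : var3) : A :=
  match v with X3 => x | Y3 => y | Z3 => z end.
Definition env4 (A : Type) (x y z w : A) (v : var4) : A :=
  match v with X4 => x | Y4 => y | Z4 => z | W4 => w end.

Definition ev3 (A : Type) (f : A -> A -> A -> A) (s : term var3) (x y z : A) :=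
  eval f (env3 x y z) s.
Definition ev4 (A : Type) (f : A -> A -> A -> A) (s : term var4) (x y z w : A) :=
  eval f (env4 x y z w) s.

Definition alg_class := forall A : Type, (A -> A -> A -> A) -> Prop.

(* (A,f) is a homomorphic image of a subalgebra of a product of algebras
   (L_i, t) with L_i lattices and t(x,y,z) = x /\ (y \/ z). *)
Definition in_B : alg_class := fun A f =>
  exists (I : Type) (d : Order.disp_t) (L : I -> latticeType d)
         (P : (forall i, L i) -> Prop) (h : (forall i, L i) -> A),
    (forall x y z, P x -> P y -> P z ->
       P (fun i => Order.meet (x i) (Order.join (y i) (z i)))) /\
    (forall a : A, exists x, P x /\ h x = a) /\
    (forall x y z, P x -> P y -> P z ->
       h (fun i => Order.meet (x i) (Order.join (y i) (z i)))
       = f (h x) (h y) (h z)).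

Definition in_Bd : alg_class := fun A f =>
  exists (I : Type) (d : Order.disp_t) (L : I -> distrLatticeType d)
         (P : (forall i, L i) -> Prop) (h : (forall i, L i) -> A),
    (forall x y z, P x -> P y -> P z ->
       P (fun i => Order.meet (x i) (Order.join (y i) (z i)))) /\
    (forall a : A, exists x, P x /\ h x = a) /\
    (forall x y z, P x -> P y -> P z ->
       h (fun i => Order.meet (x i) (Order.join (y i) (z i)))
       = f (h x) (h y) (h z)).

Definition reversed_modular (m : nat) (K : alg_class) : Prop :=
  exists u : nat -> term var4,
    forall (A : Type) (f : A -> A -> A -> A), K A f ->
    forall x y z w : A,
      (forall k, k <= m -> ev4 f (u k) x y y x = x) /\
      ev4 f (u 0) x y z w = x /\
      ev4 f (u m) x y z w = w /\
      (forall k, k < m -> odd k ->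
         ev4 f (u k) x x w w = ev4 f (u k.+1) x x w w) /\
      (forall k, k < m -> ~~ odd k ->
         ev4 f (u k) x y y w = ev4 f (u k.+1) x y y w).

Definition alvin (n : nat) (K : alg_class) : Prop :=
  exists t : nat -> term var3,
    forall (A : Type) (f : A -> A -> A -> A), K A f ->
    forall x y z : A,
      ev3 f (t 0) x y z = x /\
      ev3 f (t n) x y z = z /\
      (forall h, h <= n -> ev3 f (t h) x y x = x) /\
      (forall h, h < n -> ~~ odd h ->
         ev3 f (t h) x z z = ev3 f (t h.+1) x z z) /\
      (forall h, h < n -> odd h ->
         ev3 f (t h) x x z = ev3 f (t h.+1) x x z).

Definition congruence (A : Type) (f : A -> A -> A -> A) (R : A -> A -> Prop) :=
  (forall a, R a a) /\ (forall a b, R a b -> R b a) /\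
  (forall a b c, R a b -> R b c -> R a c) /\
  (forall a1 b1 a2 b2 a3 b3, R a1 b1 -> R a2 b2 -> R a3 b3 ->
     R (f a1 a2 a3) (f b1 b2 b3)).

Definition rmeet (A : Type) (R S : A -> A -> Prop) := fun a b => R a b /\ S a b.
Definition rcomp (A : Type) (R S : A -> A -> Prop) :=
  fun a c => exists b, R a b /\ S b c.
Definition rsub (A : Type) (R S : A -> A -> Prop) := forall a b, R a b -> S a b.

Definition CI1 (K : alg_class) : Prop :=
  forall (A : Type) (f : A -> A -> A -> A), K A f ->
  forall al be ga : A -> A -> Prop,
    congruence f al -> congruence f be -> congruence f ga ->
    rsub (rmeet al (rcomp be ga))
         (rcomp (rmeet al (rcomp ga be)) (rmeet al (rcomp ga be))).

Definition CI2 (K : alg_class) : Prop :=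
  forall (A : Type) (f : A -> A -> A -> A), K A f ->
  forall al be ga : A -> A -> Prop,
    congruence f al -> congruence f be -> congruence f ga ->
    rsub (rmeet al (rcomp be ga))
         (rcomp ga (rcomp (rmeet al be) (rcomp (rmeet al ga) be))).

From HB Require Import structures.
From mathcomp Require Import all_boot all_order.

Set Implicit Arguments.
Unset Strict Implicit.
Unset Printing Implicit Defensive.

(* All four failures are witnessed inside B^d by two small algebras:
   - the two-element algebra (bool, t) with t x y z = x && (y || z), and
   - F3, the subalgebra of (bool, t)^8 generated by the three projections
     x, y, z; it is the free algebra on three generators of the variety
     generated by (bool, t) and has 10 elements.
   An n-ary term operation of (bool, t) is represented by its truth table;
   the tables of all terms form the clone S3 (resp. S4) generated by the
   projections, computed as a finite closure.
   Alvin (resp. reversed Day) terms would give a chain of tables from the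
   first to the last projection, each satisfying t(x,y,x) = x (resp.
   u(x,y,y,x) = x) and consecutive ones agreeing on the prescribed diagonal.  Computing all
   tables reachable in 4 (resp. 5) such steps shows the last projection is
   not reachable.
   For the congruence identities we take in F3 the kernels alpha, beta,
   gamma of the substitutions z:=x, y:=x, z:=y; then x alpha z and
   x beta y gamma z, while an exhaustive search over F3 shows that the
   required intermediate elements do not exist.
   Since B^d is contained in B, everything transfers to B. *)

Definition tb (x y z : bool) : bool := x && (y || z).

Fixpoint map3 (a b c : seq bool) : seq bool :=
  match a, b, c with
  | x :: a', y :: b', z :: c' => tb x y z :: map3 a' b' c'
  | _, _, _ => [::]
  end.

Lemma map3_map (T : Type) (g1 g2 g3 : T -> bool) (s : seq T) :
  map3 (map g1 s) (map g2 s) (map g3 s) = [seq tb (g1 p) (g2 p) (g3 p) | p <- s].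
Proof. by elim: s => //= p s ->. Qed.

Lemma nth_map3 (a b c : seq bool) (i : nat) :
  size a = size b -> size b = size c ->
  nth false (map3 a b c) i = tb (nth false a i) (nth false b i) (nth false c i).
Proof.
elim: a b c i => [|x a IH] [|y b] [|z c] [|i] //= [Eab] [Ebc]; exact: IH.
Qed.

(* Truth tables of ternary and 4-ary boolean functions, listing the
   arguments in lexicographic order. *)
Definition bools : seq bool := [:: false; true].
Definition pts2 : seq (bool * bool) := [seq (x, y) | x <- bools, y <- bools].
Definition pts3 : seq (bool * bool * bool) := [seq (p, z) | p <- pts2, z <- bools].
Definition pts4 : seq (bool * bool * bool * bool) :=
  [seq (p, w) | p <- pts3, w <- bools].

Definition tab3 (g : bool -> bool -> bool -> bool) : seq bool :=
  [seq g p.1.1 p.1.2 p.2 | p <- pts3].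
Definition tab4 (g : bool -> bool -> bool -> bool -> bool) : seq bool :=
  [seq g p.1.1.1 p.1.1.2 p.1.2 p.2 | p <- pts4].

Definition ap3 (a : seq bool) (x y z : bool) : bool :=
  nth false a (4 * x + 2 * y + z).
Definition ap4 (a : seq bool) (x y z w : bool) : bool :=
  nth false a (8 * x + 4 * y + 2 * z + w).

Lemma ap3_tab3 g x y z : ap3 (tab3 g) x y z = g x y z.
Proof. by case: x; case: y; case: z. Qed.

Lemma ap4_tab4 g x y z w : ap4 (tab4 g) x y z w = g x y z w.
Proof. by case: x; case: y; case: z; case: w. Qed.

Lemma eq_tab3 g g' : (forall x y z, g x y z = g' x y z) -> tab3 g = tab3 g'.
Proof. by move=> E; apply: eq_map => -[[x y] z]. Qed.

Lemma eq_tab4 g g' : (forall x y z w, g x y z w = g' x y z w) -> tab4 g = tab4 g'.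
Proof. by move=> E; apply: eq_map => -[[[x y] z] w]. Qed.

Lemma tab3_tb g1 g2 g3 :
  tab3 (fun x y z => tb (g1 x y z) (g2 x y z) (g3 x y z))
  = map3 (tab3 g1) (tab3 g2) (tab3 g3).
Proof. by rewrite /tab3 map3_map. Qed.

Lemma tab4_tb g1 g2 g3 :
  tab4 (fun x y z w => tb (g1 x y z w) (g2 x y z w) (g3 x y z w))
  = map3 (tab4 g1) (tab4 g2) (tab4 g3).
Proof. by rewrite /tab4 map3_map. Qed.

Definition table3 (s : term var3) : seq bool := tab3 (ev3 tb s).
Definition table4 (s : term var4) : seq bool := tab4 (ev4 tb s).

Definition map3_closed (S : seq (seq bool)) : Prop :=
  forall a b c, a \in S -> b \in S -> c \in S -> map3 a b c \in S.

Lemma map3_closedP (S : seq (seq bool)) :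
  all (fun a => all (fun b => all (fun c => map3 a b c \in S) S) S) S ->
  map3_closed S.
Proof. by move=> H a b c /(allP H) /allP Ha /Ha /allP Hb /Hb. Qed.

Lemma tables_in_clone (V : Type) (table : term V -> seq bool)
    (S : seq (seq bool)) :
  map3_closed S -> (forall v, table (tvar v) \in S) ->
  (forall a b c, table (tapp a b c) = map3 (table a) (table b) (table c)) ->
  forall s, table s \in S.
Proof.
move=> S_closed S_vars table_tapp.
by elim=> [v|a IHa b IHb c IHc]; rewrite ?table_tapp; auto.
Qed.

Definition add_new (S : seq (seq bool)) (a : seq bool) : seq (seq bool) :=
  if a \in S then S else a :: S.
Definition clone_step (S : seq (seq bool)) : seq (seq bool) :=
  foldl add_new S (flatten [seq [seq map3 a b c | b <- S, c <- S] | a <- S]).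

(* The ternary and 4-ary term operations of (bool, t): two saturation
   steps already reach the closure. *)
Definition S3 : seq (seq bool) :=
  iter 2 clone_step [seq table3 (tvar v) | v <- [:: X3; Y3; Z3]].
Definition S4 : seq (seq bool) :=
  iter 2 clone_step [seq table4 (tvar v) | v <- [:: X4; Y4; Z4; W4]].

Lemma S3_closed : map3_closed S3.
Proof. by apply: map3_closedP; vm_compute. Qed.

Lemma S4_closed : map3_closed S4.
Proof. by apply: map3_closedP; vm_compute. Qed.

Lemma table3_in_S3 (s : term var3) : table3 s \in S3.
Proof.
apply: (tables_in_clone S3_closed); first by case; vm_compute.
by move=> a b c; rewrite /table3 -tab3_tb.
Qed.

Lemma table4_in_S4 (s : term var4) : table4 s \in S4.
Proof.
apply: (tables_in_clone S4_closed); first by case; vm_compute.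
by move=> a b c; rewrite /table4 -tab4_tb.
Qed.

Section Levels.
Variables (T : eqType) (L : seq T) (r : nat -> rel T) (start : T).

Fixpoint level (k : nat) : seq T :=
  if k is k'.+1 then [seq g <- L | has (fun f => r k' f g) (level k')]
  else [:: start].

Lemma chain_in_level (c : nat -> T) (n : nat) :
  c 0 = start -> (forall k, k <= n -> c k \in L) ->
  (forall k, k < n -> r k (c k) (c k.+1)) ->
  forall k, k <= n -> c k \in level k.
Proof.
move=> c0 cL cr; elim=> [|k IH] lt_kn; first by rewrite c0 mem_seq1.
rewrite /= mem_filter cL // andbT; apply/hasP; exists (c k); first exact: IH (ltnW _).
exact: cr.
Qed.
End Levels.

Definition fixes_xyx (a : seq bool) : bool :=
  all (fun x => all (fun y => ap3 a x y x == x) bools) bools.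
Definition agree_xzz (a b : seq bool) : bool :=
  all (fun x => all (fun z => ap3 a x z z == ap3 b x z z) bools) bools.
Definition agree_xxz (a b : seq bool) : bool :=
  all (fun x => all (fun z => ap3 a x x z == ap3 b x x z) bools) bools.
Definition alvin_step (h : nat) : rel (seq bool) :=
  if odd h then agree_xxz else agree_xzz.

Definition alvin_level : nat -> seq (seq bool) :=
  level [seq a <- S3 | fixes_xyx a] alvin_step (table3 (tvar X3)).

Lemma alvin_level4 : table3 (tvar Z3) \notin alvin_level 4.
Proof. by vm_compute. Qed.

Lemma bool_not_alvin4 (K : alg_class) : K bool tb -> ~ alvin 4 K.
Proof.
move=> Kbool [t Ht]; have H := Ht bool tb Kbool.
have t0 : table3 (t 0) = table3 (tvar X3) by apply: eq_tab3 => x y z; case: (H x y z).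
have t4 : table3 (t 4) = table3 (tvar Z3).
  by apply: eq_tab3 => x y z; case: (H x y z) => _ [].
suff: table3 (t 4) \in alvin_level 4 by rewrite t4 (negbTE alvin_level4).
apply: (chain_in_level (c := fun h => table3 (t h)) t0 _ _ (leqnn 4)).
- move=> h le_h4; rewrite mem_filter table3_in_S3 andbT.
  apply/allP => x _; apply/allP => y _; rewrite ap3_tab3; apply/eqP.
  by case: (H x y x) => _ [_ [fix_xyx _]]; apply: fix_xyx.
- move=> h lt_h4; rewrite /alvin_step; case: ifP => odd_h.
    apply/allP => x _; apply/allP => z _; rewrite !ap3_tab3; apply/eqP.
    by case: (H x x z) => _ [_ [_ [_ step]]]; apply: step.
  apply/allP => x _; apply/allP => z _; rewrite !ap3_tab3; apply/eqP.
  by case: (H x z z) => _ [_ [_ [step _]]]; apply: step; rewrite ?odd_h.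
Qed.

Definition fixes_xyyx (a : seq bool) : bool :=
  all (fun x => all (fun y => ap4 a x y y x == x) bools) bools.
Definition agree_xxww (a b : seq bool) : bool :=
  all (fun x => all (fun w => ap4 a x x w w == ap4 b x x w w) bools) bools.
Definition agree_xyyw (a b : seq bool) : bool :=
  all (fun x => all (fun y => all (fun w =>
    ap4 a x y y w == ap4 b x y y w) bools) bools) bools.
Definition day_step (k : nat) : rel (seq bool) :=
  if odd k then agree_xxww else agree_xyyw.

Definition day_level : nat -> seq (seq bool) :=
  level [seq a <- S4 | fixes_xyyx a] day_step (table4 (tvar X4)).

Lemma day_level5 : table4 (tvar W4) \notin day_level 5.
Proof. by vm_compute. Qed.

Lemma bool_not_reversed_modular5 (K : alg_class) :
  K bool tb -> ~ reversed_modular 5 K.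
Proof.
move=> Kbool [u Hu]; have H := Hu bool tb Kbool.
have u0 : table4 (u 0) = table4 (tvar X4).
  by apply: eq_tab4 => x y z w; case: (H x y z w) => _ [].
have u5 : table4 (u 5) = table4 (tvar W4).
  by apply: eq_tab4 => x y z w; case: (H x y z w) => _ [_ []].
suff: table4 (u 5) \in day_level 5 by rewrite u5 (negbTE day_level5).
apply: (chain_in_level (c := fun k => table4 (u k)) u0 _ _ (leqnn 5)).
- move=> k le_k5; rewrite mem_filter table4_in_S4 andbT.
  apply/allP => x _; apply/allP => y _; rewrite ap4_tab4; apply/eqP.
  by case: (H x y x x) => fix_xyyx _; apply: fix_xyyx.
- move=> k lt_k5; rewrite /day_step; case: ifP => odd_k.
    apply/allP => x _; apply/allP => w _; rewrite !ap4_tab4; apply/eqP.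
    by case: (H x x w w) => _ [_ [_ [step _]]]; apply: step.
  apply/allP => x _; apply/allP => y _; apply/allP => w _; rewrite !ap4_tab4.
  by apply/eqP; case: (H x y y w) => _ [_ [_ [_ step]]]; apply: step; rewrite ?odd_k.
Qed.

Lemma bool_in_Bd : in_Bd tb.
Proof.
exists unit, _, (fun _ => (bool : distrLatticeType _)), (fun _ => True),
  (fun x => x tt).
by split=> //; split=> [a|]; first by exists (fun _ => a).
Qed.

Lemma Bd_in_B (A : Type) (f : A -> A -> A -> A) : in_Bd f -> in_B f.
Proof. by move=> [I [d [L [P [h H]]]]]; exists I, d, L, P, h. Qed.

Lemma kernel_congruence (A : Type) (B : eqType)
    (f : A -> A -> A -> A) (g : B -> B -> B -> B) (phi : A -> B) :
  (forall a b c, phi (f a b c) = g (phi a) (phi b) (phi c)) ->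
  congruence f (fun a b => phi a == phi b).
Proof.
move=> phiM; split=> [a|]; first exact: eqxx.
split=> [a b /eqP -> //|].
split=> [a b c /eqP -> /eqP -> //|].
by move=> a1 b1 a2 b2 a3 b3 /eqP E1 /eqP E2 /eqP E3; rewrite !phiM E1 E2 E3.
Qed.

Definition precomp3 (s1 s2 s3 : bool -> bool -> bool -> bool) (a : seq bool) :=
  tab3 (fun x y z => ap3 a (s1 x y z) (s2 x y z) (s3 x y z)).

Lemma precomp3_map3 s1 s2 s3 (a b c : seq bool) :
  size a = size b -> size b = size c ->
  precomp3 s1 s2 s3 (map3 a b c)
  = map3 (precomp3 s1 s2 s3 a) (precomp3 s1 s2 s3 b) (precomp3 s1 s2 s3 c).
Proof.
move=> Eab Ebc; rewrite /precomp3 -tab3_tb; apply: eq_tab3 => x y z.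
exact: nth_map3.
Qed.

(* A nonempty map3-closed family of tables of a common length n is an
   algebra in B^d: a subalgebra of the product (bool, t)^n. *)
Section TableAlgebra.
Variables (n : nat) (S : seq (seq bool)).
Hypotheses (S_closed : map3_closed S) (S_size : forall a, a \in S -> size a = n).

Definition tables : Type := {a : seq bool | a \in S}.

Definition tables_op (a b c : tables) : tables :=
  exist _ (map3 (val a) (val b) (val c)) (S_closed (valP a) (valP b) (valP c)).

Lemma tables_in_Bd (a0 : tables) : in_Bd tables_op.
Proof.
pose row (x : nat -> bool) := mkseq x n.
have row_op x y z :
    row (fun i => Order.meet (x i) (Order.join (y i) (z i)))
    = map3 (row x) (row y) (row z) by rewrite /row /mkseq map3_map.
exists nat, _, (fun _ => (bool : distrLatticeType _)), (fun x => row x \in S),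
  (fun x => insubd a0 (row x)).
split=> [x y z Sx Sy Sz|]; first by rewrite row_op S_closed.
split=> [a|x y z Sx Sy Sz].
  exists (nth false (val a)); rewrite /row -(S_size (valP a)) mkseq_nth.
  by split; [exact: valP | apply: val_inj; rewrite insubdK ?(valP a)].
apply: val_inj; rewrite /= row_op !insubdK //; exact: S_closed.
Qed.

(* Precomposition with a substitution is a homomorphism on tables, so its
   kernel is a congruence. *)
Lemma precomp3_congruence s1 s2 s3 :
  congruence tables_op
    (fun a b : tables => precomp3 s1 s2 s3 (val a) == precomp3 s1 s2 s3 (val b)).
Proof.
apply: (kernel_congruence (g := map3)) => a b c.
by apply: precomp3_map3; rewrite !S_size //; apply: valP.
Qed.
End TableAlgebra.

Lemma S3_size (a : seq bool) : a \in S3 -> size a = 8.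
Proof.
have sizes : all (fun a => size a == 8) S3 by vm_compute.
by move/(allP sizes)/eqP.
Qed.

Definition F3 : Type := tables S3.
Definition F3_op : F3 -> F3 -> F3 -> F3 := tables_op S3_closed.
Definition gen3 (v : var3) : F3 :=
  exist (fun a => a \in S3) (table3 (tvar v)) (table3_in_S3 (tvar v)).

Lemma F3_in_Bd : in_Bd F3_op.
Proof. exact: (tables_in_Bd S3_closed S3_size (gen3 X3)). Qed.

(* The kernels of the substitutions z := x, y := x and z := y. *)
Definition alpha3 : rel (seq bool) := fun a b =>
  precomp3 (fun x _ _ => x) (fun _ y _ => y) (fun x _ _ => x) a
  == precomp3 (fun x _ _ => x) (fun _ y _ => y) (fun x _ _ => x) b.
Definition beta3 : rel (seq bool) := fun a b =>
  precomp3 (fun x _ _ => x) (fun x _ _ => x) (fun _ _ z => z) a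
  == precomp3 (fun x _ _ => x) (fun x _ _ => x) (fun _ _ z => z) b.
Definition gamma3 : rel (seq bool) := fun a b =>
  precomp3 (fun x _ _ => x) (fun _ y _ => y) (fun _ y _ => y) a
  == precomp3 (fun x _ _ => x) (fun _ y _ => y) (fun _ y _ => y) b.

Definition on_F3 (R : rel (seq bool)) (a b : F3) : Prop := R (val a) (val b).

Lemma alpha3_congruence : congruence F3_op (on_F3 alpha3).
Proof. exact: (precomp3_congruence S3_closed S3_size). Qed.
Lemma beta3_congruence : congruence F3_op (on_F3 beta3).
Proof. exact: (precomp3_congruence S3_closed S3_size). Qed.
Lemma gamma3_congruence : congruence F3_op (on_F3 gamma3).
Proof. exact: (precomp3_congruence S3_closed S3_size). Qed.

Lemma generators_related :
  alpha3 (table3 (tvar X3)) (table3 (tvar Z3)) /\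
  beta3 (table3 (tvar X3)) (table3 (tvar Y3)) /\
  gamma3 (table3 (tvar Y3)) (table3 (tvar Z3)).
Proof. by vm_compute. Qed.

Lemma no_CI1_witness (x := table3 (tvar X3)) (z := table3 (tvar Z3)) :
  all (fun m => all (fun c => all (fun c' => ~~ [&& alpha3 x m, gamma3 x c,
     beta3 c m, alpha3 m z, gamma3 m c' & beta3 c' z]) S3) S3) S3.
Proof. by vm_compute. Qed.

Lemma no_CI2_witness (x := table3 (tvar X3)) (z := table3 (tvar Z3)) :
  all (fun c1 => all (fun c2 => all (fun c3 => ~~ [&& gamma3 x c1,
     alpha3 c1 c2, beta3 c1 c2, alpha3 c2 c3, gamma3 c2 c3 & beta3 c3 z]) S3) S3) S3.
Proof. by vm_compute. Qed.

Lemma F3_not_CI1 (K : alg_class) : K F3 F3_op -> ~ CI1 K.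
Proof.
move=> KF3 ci1; have [al_xz [be_xy ga_yz]] := generators_related.
have [m [[al_xm [c [ga_xc be_cm]]] [al_mz [c' [ga_mc' be_c'z]]]]] :=
  ci1 _ _ KF3 _ _ _ alpha3_congruence beta3_congruence gamma3_congruence
      (gen3 X3) (gen3 Z3) (conj al_xz (ex_intro _ (gen3 Y3) (conj be_xy ga_yz))).
move: no_CI1_witness => /allP/(_ _ (valP m))/allP/(_ _ (valP c))/allP/(_ _ (valP c')).
by rewrite al_xm ga_xc be_cm al_mz ga_mc' be_c'z.
Qed.

Lemma F3_not_CI2 (K : alg_class) : K F3 F3_op -> ~ CI2 K.
Proof.
move=> KF3 ci2; have [al_xz [be_xy ga_yz]] := generators_related.
have [c1 [ga_xc1 [c2 [[al_12 be_12] [c3 [[al_23 ga_23] be_3z]]]]]] :=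
  ci2 _ _ KF3 _ _ _ alpha3_congruence beta3_congruence gamma3_congruence
      (gen3 X3) (gen3 Z3) (conj al_xz (ex_intro _ (gen3 Y3) (conj be_xy ga_yz))).
move: no_CI2_witness => /allP/(_ _ (valP c1))/allP/(_ _ (valP c2))/allP/(_ _ (valP c3)).
by rewrite ga_xc1 al_12 be_12 al_23 ga_23 be_3z.
Qed.

Theorem proposition3p6 :
  ~ reversed_modular 5 in_B /\ ~ reversed_modular 5 in_Bd /\
  ~ CI1 in_B /\ ~ CI1 in_Bd /\
  ~ CI2 in_B /\ ~ CI2 in_Bd /\
  ~ alvin 4 in_B /\ ~ alvin 4 in_Bd.
Proof.
have bool_in_B := Bd_in_B bool_in_Bd.
have F3_in_B := Bd_in_B F3_in_Bd.
split; first exact: bool_not_reversed_modular5 bool_in_B.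
split; first exact: bool_not_reversed_modular5 bool_in_Bd.
split; first exact: F3_not_CI1 F3_in_B.
split; first exact: F3_not_CI1 F3_in_Bd.
split; first exact: F3_not_CI2 F3_in_B.
split; first exact: F3_not_CI2 F3_in_Bd.
split; first exact: bool_not_alvin4 bool_in_B.
exact: bool_not_alvin4 bool_in_Bd.
Qed.
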